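(* Let $n\equiv 2\pmod 4$. Let $E$ be a non-empty subset of $\{1,3,\dots,n-1\}$, let $I\subseteq\{0,1,\dots,n/2\}$, and suppose $E\cap\{i,n-i\}=\emptyset$ for all $i\in I$. Then the hypercube $Q_n$ admits a $D$-magic labeling for $$D=E\cup\bigcup_{i\in I}\{i,n-i\}.$$
   Context: The hypercube $Q_n$ has vertex set $\mathbb{F}_2^n$, two vertices adjacent iff they differ in exactly one coordinate; $d(x,y)$ is the graph distance. For a set of distances $D$ and a vertex $x$ of a graph $G$, $N_D(x)=\{y\in V(G): d(x,y)\in D\}$. For a graph $G$ of order $N$, a $D$-magic labeling is a bijection $f:V(G)\to\{1,\dots,N\}$ for which there exists a constant $k$ with $\sum_{y\in N_D(x)}f(y)=k$ for every vertex $x$. *)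

From mathcomp Require Import all_boot.
Set Implicit Arguments. Unset Strict Implicit. Unset Printing Implicit Defensive.

Definition vert (n : nat) := {ffun 'I_n -> bool}.

Definition qadj (n : nat) (x y : vert n) : bool :=
  #|[set i : 'I_n | x i != y i]| == 1.

Fixpoint reach (n : nat) (k : nat) (x y : vert n) : bool :=
  match k with
  | 0 => x == y
  | k'.+1 => (x == y) || [exists z : vert n, qadj x z && reach k' z y]
  end.

(* graph distance in Q_n: least k such that y is reachable from x in k steps
   (searching k < 2^n, which suffices since Q_n is connected with 2^n vertices) *)
Definition qdist (n : nat) (x y : vert n) : nat :=
  find (fun k => reach k x y) (iota 0 (2 ^ n)).

Definition ND (n : nat) (D : pred nat) (x : vert n) : {set vert n} :=
  [set y | D (qdist x y)].

(* D-magic labeling: f is a bijection V(Q_n) -> {1,...,2^n} (injective with values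
   in {1..2^n}, and #|V| = 2^n) with constant D-neighbourhood sums. *)
Definition D_magic_labeling (n : nat) (D : pred nat) (f : vert n -> nat) : Prop :=
  injective f /\ (forall x, 1 <= f x <= 2 ^ n) /\
  exists k : nat, forall x : vert n, \sum_(y in ND D x) f y = k.

From mathcomp Require Import all_boot fingroup perm.
From mathcomp Require Import zify.
Set Implicit Arguments. Unset Strict Implicit. Unset Printing Implicit Defensive.

(* Write n = 2m with m odd and pick n sets T_j of m coordinates whose parity
   functionals y |-> sum_(k in T_j) y_k (mod 2) are linearly independent.
   Labelling y by 1 + sum_j [odd parity of y on T_j] 2^j is then a bijection
   onto {1, ..., 2^n}, and it is D-magic as soon as each parity splits every
   N_D(x) into two halves.  As E only contains odd distances, D is invariant
   under d |-> n - d on even d.  If d(x, y) is odd, permuting the coordinates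
   of x + y by an involution exchanging T_j with its complement keeps d(x, y)
   and flips the parity of y on T_j; if d(x, y) is even, complementing y flips
   that parity because |T_j| is odd, and turns d(x, y) into n - d(x, y).
   Together these give an involution of N_D(x) exchanging the two halves. *)

Section Hamming.

Variable n : nat.
Implicit Types x y z : vert n.

Definition vxor x y : vert n := [ffun k => x k (+) y k].
Definition wt z := \sum_(k < n) z k.
Definition ham x y := wt (vxor x y).

Lemma vxorKv x y : vxor x (vxor x y) = y.
Proof. by apply/ffunP => k; rewrite !ffunE addKb. Qed.

Lemma ham_le x y : ham x y <= n.
Proof.
rewrite -[leqRHS]card_ord -sum1_card.
by apply: leq_sum => k _; rewrite leq_b1.
Qed.

Lemma ham_eq0 x y : (ham x y == 0) = (x == y).
Proof.
rewrite /ham /wt sum_nat_eq0; apply/forallP/eqP => [xy|->] /=.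
  by apply/ffunP => k; move: (xy k); rewrite ffunE; case: (x k); case: (y k).
by move=> k; rewrite ffunE addbb.
Qed.

Lemma hamxx x : ham x x = 0.
Proof. by apply/eqP; rewrite ham_eq0. Qed.

Lemma ham_triangle x y z : ham x y <= ham x z + ham z y.
Proof.
rewrite /ham /wt -big_split; apply: leq_sum => k _ /=; rewrite !ffunE.
by case: (x k); case: (y k); case: (z k).
Qed.

Lemma card_diff_ham x y : #|[set k | x k != y k]| = ham x y.
Proof.
rewrite /ham /wt -sum1_card big_mkcond; apply: eq_bigr => k _.
by rewrite inE ffunE; case: (x k); case: (y k).
Qed.

Lemma ham_step x y : x != y -> exists2 z, qadj x z & ham x y = (ham z y).+1.
Proof.
move=> neq_xy; have /existsP [i xy_i] : [exists i, x i != y i].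
  by apply: contraR neq_xy => /existsPn xy; apply/eqP/ffunP => k; apply/eqP/negPn.
pose z : vert n := [ffun k => if k == i then y k else x k].
have diff_xz : [set k | x k != z k] = [set i].
  apply/setP => k; rewrite !inE /z ffunE.
  by case: (eqVneq k i) => [->|_]; [rewrite xy_i | rewrite eqxx].
exists z; first by rewrite /qadj diff_xz cards1.
rewrite /ham /wt (bigD1 i) // [in RHS](bigD1 i) // /vxor /z !ffunE eqxx addbb.
have -> : x i (+) y i = true by case: (x i) xy_i; case: (y i).
by congr (1 + _); apply: eq_bigr => k /negbTE ki; rewrite !ffunE ki.
Qed.

Lemma reach_ham k x y : reach k x y = (ham x y <= k).
Proof.
elim: k x => [|k IHk] x /=; first by rewrite leqn0 ham_eq0.
apply/orP/idP => [[/eqP-> | /existsP [z /andP [xz zy]]] | le_xy].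
- by rewrite hamxx.
- move: xz; rewrite /qadj card_diff_ham => /eqP xz.
  by apply: leq_trans (ham_triangle x y z) _; rewrite xz add1n ltnS -IHk.
- case: (eqVneq x y) => [->|neq_xy]; [by left | right].
  have [z xz xzy] := ham_step neq_xy.
  by apply/existsP; exists z; rewrite xz IHk -ltnS -xzy.
Qed.

Lemma find_iota_leq h N : h < N -> find (leq h) (iota 0 N) = h.
Proof.
move=> lt_hN; rewrite -(subnKC (ltnW lt_hN)) iotaD find_cat size_iota add0n.
have /negbTE -> : ~~ has (leq h) (iota 0 h).
  by apply/hasPn => k; rewrite mem_iota add0n -ltnNge => /andP [].
by move: lt_hN; rewrite -subn_gt0; case: (N - h) => //= r _; rewrite leqnn addn0.
Qed.

Lemma qdist_ham x y : qdist x y = ham x y.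
Proof.
rewrite /qdist (eq_find (fun k => reach_ham k x y)).
by apply: find_iota_leq; apply: leq_ltn_trans (ham_le x y) (ltn_expl _ _).
Qed.

Lemma mem_ND (D : pred nat) x y : (y \in ND D x) = D (ham x y).
Proof. by rewrite inE qdist_ham. Qed.

Lemma sum1_ham_shift (D : pred nat) x :
  \sum_(y | D (ham x y)) 1 = \sum_(z | D (wt z)) 1.
Proof.
rewrite (reindex_inj (inv_inj (vxorKv x))).
by apply: eq_bigl => z; rewrite /ham vxorKv.
Qed.

End Hamming.

Section Parity.

Variable n : nat.
Implicit Types (x y z : vert n) (T : {set 'I_n}).

Definition par T z := odd (\sum_(k in T) z k).
Definition vnot z : vert n := [ffun k => ~~ z k].
Definition vperm (s : 'I_n -> 'I_n) z : vert n := [ffun k => z (s k)].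

Lemma par_vxor T x y : par T (vxor x y) = par T x (+) par T y.
Proof.
rewrite /par -oddD.
have -> : \sum_(k in T) x k + \sum_(k in T) y k =
          \sum_(k in T) vxor x y k + (\sum_(k in T) (x k && y k)).*2.
  rewrite -muln2 big_distrl -!big_split; apply: eq_bigr => k _.
  by rewrite /vxor ffunE; case: (x k); case: (y k).
by rewrite oddD odd_double addbF.
Qed.

Lemma par_setC T z : par (~: T) z = odd (wt z) (+) par T z.
Proof.
rewrite /par /wt [X in _ = odd X (+) _](bigID (mem T)) /= oddD addbAC addbb addFb.
by congr odd; apply: eq_bigl => k; rewrite inE.
Qed.

Lemma sum_vnot (P : pred 'I_n) z :
  \sum_(k | P k) vnot z k + \sum_(k | P k) z k = #|P|.
Proof.
rewrite -sum1_card -big_split; apply: eq_bigr => k _.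
by rewrite /vnot ffunE; case: (z k).
Qed.

Lemma par_vnot T z : par T (vnot z) = odd #|T| (+) par T z.
Proof. by rewrite /par -(sum_vnot (mem T) z) oddD addbK. Qed.

Lemma ham_vnot x y : ham x (vnot y) = n - ham x y.
Proof.
rewrite /ham.
have -> : vxor x (vnot y) = vnot (vxor x y).
  by apply/ffunP => k; rewrite !ffunE addbN.
by rewrite /wt; move: (sum_vnot xpredT (vxor x y)); rewrite card_ord /=; lia.
Qed.

Lemma wt_vperm (s : 'I_n -> 'I_n) z : injective s -> wt (vperm s z) = wt z.
Proof.
move=> s_inj; rewrite /wt [RHS](reindex_inj s_inj).
by apply: eq_bigr => k _; rewrite ffunE.
Qed.

Lemma vnotK : involutive vnot.
Proof. by move=> z; apply/ffunP => k; rewrite !ffunE negbK. Qed.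

Lemma vpermK (s : 'I_n -> 'I_n) : involutive s -> involutive (vperm s).
Proof. by move=> sK z; apply/ffunP => k; rewrite !ffunE sK. Qed.

End Parity.

Section SwapBalance.

Variables (n : nat) (T : {set 'I_n}) (s : 'I_n -> 'I_n).
Hypotheses (sK : involutive s) (s_swap : forall k, (s k \in T) = (k \notin T)).

Lemma par_vperm_swap z : par T (vperm s z) = odd (wt z) (+) par T z.
Proof.
rewrite -par_setC /par (reindex_inj (inv_inj sK)).
by congr odd; apply: eq_big => k; rewrite ?inE ?s_swap // ffunE sK.
Qed.

Lemma card_swap : #|T| + #|T| = n.
Proof.
have card_setC : #|~: T| = #|T|.
  rewrite -(card_preimset T (inv_inj sK)); apply: eq_card => k.
  by rewrite !inE s_swap.
by rewrite -[RHS](card_ord n) -(cardsC T) card_setC.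
Qed.

Variables (x : vert n) (D : pred nat).
Hypotheses (D_sym : forall d, d <= n -> ~~ odd d -> D (n - d) = D d)
           (T_odd : odd #|T|).

Definition flip y := if odd (ham x y) then vxor x (vperm s (vxor x y)) else vnot y.

Lemma ham_flip y : ham x (flip y) = if odd (ham x y) then ham x y else n - ham x y.
Proof.
rewrite /flip; case: ifP => _; last exact: ham_vnot.
by rewrite /ham vxorKv wt_vperm //; apply: inv_inj.
Qed.

Lemma odd_ham_flip y : odd (ham x (flip y)) = odd (ham x y).
Proof.
rewrite ham_flip; case: ifP => // even_xy.
have n_even : odd n = false by rewrite -card_swap addnn odd_double.
by rewrite oddB ?ham_le // n_even even_xy.
Qed.

Lemma flipK : involutive flip.
Proof.
move=> y; rewrite {1}/flip odd_ham_flip /flip; case: (odd (ham x y)); last exact: vnotK.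
by rewrite vxorKv vpermK // vxorKv.
Qed.

Lemma par_flip y : par T (flip y) = ~~ par T y.
Proof.
rewrite /flip; case: ifP => [odd_xy | _]; last by rewrite par_vnot T_odd.
rewrite par_vxor par_vperm_swap par_vxor -/(ham x y) odd_xy.
by case: (par T x); case: (par T y).
Qed.

Lemma D_ham_flip y : D (ham x (flip y)) = D (ham x y).
Proof. by rewrite ham_flip; case: ifP => // even_xy; rewrite D_sym ?ham_le ?even_xy. Qed.

Lemma double_sum_par : (\sum_(y | D (ham x y)) par T y).*2 = \sum_(y | D (ham x y)) 1.
Proof.
have par_compl : \sum_(y | D (ham x y)) par T y = \sum_(y | D (ham x y)) ~~ par T y.
  rewrite (reindex_inj (inv_inj flipK)).
  by apply: eq_big => y; rewrite ?D_ham_flip // par_flip.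
rewrite -addnn {2}par_compl -big_split; apply: eq_bigr => y _.
by case: (par T y).
Qed.

End SwapBalance.

Lemma conj_involutive (T : finType) (t : {perm T}) (s : T -> T) :
  involutive s -> involutive (fun k => (t^-1)%g (s (t k))).
Proof. by move=> sK k; rewrite permKV sK permK. Qed.

Lemma conj_swap (T : finType) (t : {perm T}) (s : T -> T) (U : {set T}) :
  (forall k, (s k \in U) = (k \notin U)) ->
  forall k, ((t^-1)%g (s (t k)) \in t @^-1: U) = (k \notin t @^-1: U).
Proof. by move=> sU k; rewrite !inE permKV sU. Qed.

Section TwistedFamily.

Variables (n : nat) (T : {set 'I_n}) (c0 c1 : 'I_n).
Hypotheses (c0T : c0 \in T) (c1T : c1 \notin T).

Definition partner (j : 'I_n) := if j \in T then c1 else c0.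

(* For j != c0 the transpositions (j, partner j) are the edges of a spanning
   tree of the complete bipartite graph between T and its complement. *)
Definition twist (j : 'I_n) : {perm 'I_n} :=
  if j == c0 then 1%g else tperm j (partner j).

Definition twisted (j : 'I_n) : {set 'I_n} := twist j @^-1: T.

Lemma par_tperm a b z : a \in T -> b \notin T ->
  par (tperm a b @^-1: T) z = par T z (+) z a (+) z b.
Proof.
move=> aT bT; have neq_ab : a != b by apply: contraNneq bT => <-.
have -> : tperm a b @^-1: T = b |: (T :\ a).
  apply/setP => k; rewrite !inE.
  case: tpermP => [->|->|/eqP ka /eqP kb].
  - by rewrite (negbTE bT) (negbTE neq_ab) eqxx.
  - by rewrite eqxx.
  - by rewrite (negbTE kb) ka.
rewrite /par big_setU1 ?inE ?(negbTE bT) ?andbF // [in RHS](big_setD1 a aT).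
by rewrite !oddD !oddb; case: (z a); case: (z b); case: odd.
Qed.

Lemma par_twisted j z : j != c0 ->
  par (twisted j) z = par T z (+) z j (+) z (partner j).
Proof.
rewrite /twisted /twist /partner => /negbTE ->; case: ifP => jT.
  by rewrite par_tperm.
by rewrite tpermC par_tperm ?jT // addbAC.
Qed.

Lemma twisted_c0 : twisted c0 = T.
Proof. by apply/setP => k; rewrite /twisted /twist eqxx inE perm1. Qed.

Lemma twisted_kernel z : odd #|T| ->
  (forall j, par (twisted j) z = false) -> forall k, z k = false.
Proof.
move=> T_odd par_z.
have par_T : par T z = false by rewrite -twisted_c0 par_z.
have z_partner j : j != c0 -> z j = z (partner j).
  by move=> jc0; move: (par_z j); rewrite par_twisted // par_T; case: (z j); case: (z _).
have z_c1 : z c1 = z c0.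
  have c1c0 : c1 != c0 by apply: contraNneq c1T => ->.
  by rewrite z_partner // /partner (negbTE c1T).
have z_const k : z k = z c0.
  case: (eqVneq k c0) => [-> // | kc0].
  by rewrite z_partner // /partner; case: (k \in T).
move: par_T; rewrite /par; under eq_bigr => k _ do rewrite z_const.
by rewrite sum_nat_const oddM T_odd oddb => z_c0 k; rewrite z_const.
Qed.

End TwistedFamily.

Lemma sum_bits_lt N (b : 'I_N -> bool) : \sum_(j < N) b j * 2 ^ j < 2 ^ N.
Proof.
elim: N b => [|N IHN] b; first by rewrite big_ord0.
rewrite big_ord_recr expnS /=; have := IHN (fun j => b (widen_ord (leqnSn N) j)).
by case: (b ord_max) => /=; lia.
Qed.

Lemma sum_bits_inj N (b b' : 'I_N -> bool) :
  \sum_(j < N) b j * 2 ^ j = \sum_(j < N) b' j * 2 ^ j -> b =1 b'.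
Proof.
elim: N b b' => [|N IHN] b b' eq_sum j; first by case: j.
move: eq_sum; rewrite !big_ord_recr /= => eq_sum.
have lt_low := sum_bits_lt (fun j => b (widen_ord (leqnSn N) j)).
have lt_low' := sum_bits_lt (fun j => b' (widen_ord (leqnSn N) j)).
have top : b ord_max = b' ord_max.
  by move: eq_sum lt_low lt_low'; case: (b ord_max); case: (b' ord_max) => //=; lia.
move: eq_sum; rewrite top => /addIn eq_low.
case: (unliftP ord_max j) => [j' ->|->] //.
have -> : lift ord_max j' = widen_ord (leqnSn N) j' by apply: val_inj; exact: lift_max.
exact: IHN eq_low j'.
Qed.

Section HalfCube.

Variable m : nat.

Definition lower : {set 'I_(m + m)} := [set k : 'I_(m + m) | k < m].

Definition halfswap (k : 'I_(m + m)) : 'I_(m + m) :=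
  unsplit (match split k with inl i => inr i | inr i => inl i end).

Lemma halfswapK : involutive halfswap.
Proof.
by move=> k; rewrite /halfswap unsplitK; case E: (split k) => /=; rewrite -[RHS]splitK E.
Qed.

Lemma halfswap_lower k : (halfswap k \in lower) = (k \notin lower).
Proof.
rewrite /halfswap !inE; case: (splitP k) => i _ /=; last exact: ltn_ord.
by rewrite ltnNge leq_addr.
Qed.

Lemma card_lower : #|lower| = m.
Proof. by have := card_swap halfswapK halfswap_lower; lia. Qed.

Hypothesis m_odd : odd m.

Let i0 : 'I_m := Ordinal (odd_gt0 m_odd).

Definition cube_family : 'I_(m + m) -> {set 'I_(m + m)} :=
  twisted lower (lshift m i0) (rshift m i0).

Definition code (y : vert (m + m)) := \sum_(j < m + m) par (cube_family j) y * 2 ^ j.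

Lemma code_inj : injective code.
Proof.
have c0_lower : lshift m i0 \in lower by rewrite inE; exact: ltn_ord i0.
have c1_lower : rshift m i0 \notin lower by rewrite inE /= -leqNgt leq_addr.
move=> y y' /sum_bits_inj same_bits; apply/ffunP => k.
have : vxor y y' k = false.
  apply: (twisted_kernel (z := vxor y y') c0_lower c1_lower); first by rewrite card_lower.
  by move=> j; rewrite par_vxor same_bits addbb.
by rewrite /vxor ffunE; case: (y k); case: (y' k).
Qed.

Variable D : pred nat.
Hypothesis D_sym : forall d, d <= m + m -> ~~ odd d -> D (m + m - d) = D d.

Lemma sum_code_ND x :
  \sum_(y | D (ham x y)) code y = \sum_(j < m + m) (\sum_(z : vert (m + m) | D (wt z)) 1)./2 * 2 ^ j.
Proof.
rewrite exchange_big; apply: eq_bigr => j _; rewrite -big_distrl /=; congr (_ * _).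
have balanced :
    (\sum_(y | D (ham x y)) par (cube_family j) y).*2 = \sum_(y | D (ham x y)) 1.
  apply: (double_sum_par (conj_involutive _ halfswapK)).
  - exact: conj_swap halfswap_lower.
  - exact: D_sym.
  - by rewrite card_preimset ?card_lower //; apply: perm_inj.
by rewrite -(sum1_ham_shift D x) -balanced doubleK.
Qed.

End HalfCube.

Theorem even_symmetric_magic (m : nat) (D : pred nat) :
  odd m -> (forall d, d <= m + m -> ~~ odd d -> D (m + m - d) = D d) ->
  exists f : vert (m + m) -> nat, D_magic_labeling D f.
Proof.
move=> m_odd D_sym; exists (fun y => 1 + code m_odd y); split; [|split].
- by move=> y y' /addnI /code_inj.
- by move=> y; rewrite add1n; apply: sum_bits_lt.
exists (\sum_(z : vert (m + m) | D (wt z)) 1 + \sum_(j < m + m) (\sum_(z : vert (m + m) | D (wt z)) 1)./2 * 2 ^ j) => x.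
rewrite (eq_bigl _ _ (mem_ND D x)) big_split /= sum1_ham_shift.
by rewrite (sum_code_ND m_odd D_sym).
Qed.

Unset Implicit Arguments.

Theorem theorem3p1 (n : nat) (E I : pred nat) :
  n %% 4 = 2 ->
  (exists e, E e) ->
  (forall e, E e -> [/\ odd e, 1 <= e & e <= n - 1]) ->
  (forall i, I i -> i <= n %/ 2) ->
  (forall i, I i -> ~~ E i /\ ~~ E (n - i)) ->
  exists f : vert n -> nat,
    @D_magic_labeling n (fun d => E d || [exists i : 'I_(n %/ 2).+1, I i && ((d == i) || (d == n - i))]) f.
Proof.
move=> n_mod4 _ E_odd _ _.
have [m -> m_odd] : exists2 m, n = m + m & odd m.
  by exists (n %/ 4).*2.+1; [lia | rewrite /= odd_double].
apply: even_symmetric_magic m_odd _ => d le_d even_d.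
have E_even k : ~~ odd k -> E k = false.
  by move=> even_k; apply: contraNF even_k => /E_odd [].
have even_nd : ~~ odd (m + m - d) by rewrite oddB // addnn odd_double.
rewrite (E_even d even_d) (E_even _ even_nd) /=.
by apply: eq_existsb => i; have := ltn_ord i; case: (I i) => //=; lia.
Qed.
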